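(* Let $M$ be a set of goods, $v$ an additive valuation on $M$, $n$ a positive integer, $k<n$ a nonnegative integer, $S\subseteq M$ with $|S|=2k$, and $x\ge0$ such that $v(g)\le\mathrm{MMS}^n_v(M)/2+x$ for all $g\in S$. Then $\mathrm{MMS}^{n-k}_v(M\setminus S)\ge\mathrm{MMS}^n_v(M)-2x$.
   Context: $\mathrm{MMS}^d_v(T)$ is the maximum, over all partitions $(P_1,\dots,P_d)$ of $T$ into $d$ (possibly empty) bundles, of $\min_j v(P_j)$. *)

From mathcomp Require Import all_boot all_order all_algebra.
Set Implicit Arguments. Unset Strict Implicit. Unset Printing Implicit Defensive.
Import Order.TTheory GRing.Theory Num.Theory.
Local Open Scope ring_scope.

(* Goods are the elements of a finite type G; a set of goods is a {set G}.
   An additive valuation is given by v : G -> R (values of single goods);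
   the value of a bundle B is \sum_(g in B) v g. *)
Definition bval (R : realFieldType) (G : finType) (v : G -> R) (B : {set G}) : R :=
  \sum_(g in B) v g.

(* A partition of T into d (possibly empty) bundles is given by an assignment
   a : G -> 'I_d; bundle j is [set g in T | a g == j]. *)
Definition bundle (G : finType) (d : nat) (T : {set G}) (a : {ffun G -> 'I_d})
  (j : 'I_d) : {set G} := [set g in T | a g == j].

Definition part_min (R : realFieldType) (G : finType) (v : G -> R) (d' : nat)
  (T : {set G}) (a : {ffun G -> 'I_d'.+1}) : R :=
  \big[Order.min/bval v (bundle T a ord0)]_(j < d'.+1) bval v (bundle T a j).

(* MMS^d_v(T): maximum over all partitions of T into d bundles of the minimal
   bundle value.  Only meaningful for d >= 1 (set to 0 for d = 0). *)
Definition MMS (R : realFieldType) (G : finType) (v : G -> R) (d : nat)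
  (T : {set G}) : R :=
  if d is d'.+1 then
    \big[Order.max/@part_min R G v d' T [ffun=> ord0]]_(a : {ffun G -> 'I_d'.+1})
      @part_min R G v d' T a
  else 0.

From mathcomp Require Import all_boot all_order all_algebra zify lra.
Set Implicit Arguments. Unset Strict Implicit. Unset Printing Implicit Defensive.
Import Order.TTheory GRing.Theory Num.Theory.
Local Open Scope ring_scope.

(* Fix an optimal partition of M into n bundles, of minimal value mu.  Once S
   is removed, a bundle that contained no good of S is still worth mu, and one
   that contained exactly one is still worth mu/2 - x.  As |S| = 2k, counting
   shows that there are at least n - k bundles of the first kind plus half as
   many of the second kind; keeping the former and merging the latter in
   pairs gives n - k bundles of M \ S, each worth at least mu - 2x. *)

Lemma double_card_leq (I : finType) (s : I -> nat) :
  (#|I|.*2 <= #|[set j | s j == 0]|.*2 + #|[set j | s j == 1]|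
              + \sum_j s j)%N.
Proof.
have card_sum (A : {set I}) : #|A| = (\sum_j (j \in A))%N.
  by rewrite -sum1_card big_mkcond; apply: eq_bigr => j _; case: (j \in A).
rewrite !card_sum -sum1_card -!muln2 !big_distrl -!big_split /=.
by apply: leq_sum => j _; rewrite !inE; case: (s j) => [|[|t]].
Qed.

Definition merge_map (I : finType) m (Z O : {set I}) (f : I -> 'I_m) :=
  forall t, (exists2 j, j \in Z & f j = t) \/
            exists j1 j2, [/\ j1 \in O, j2 \in O, j1 != j2, f j1 = t & f j2 = t].

Lemma exists_merge_map (I : finType) (Z O : {set I}) m :
  [disjoint Z & O] -> (m < #|Z| + #|O|./2)%N ->
  exists f : I -> 'I_m.+1, merge_map Z O f.
Proof.
move=> dZO ltm.
have /card_gt0P[x0 _] : (0 < #|I|)%N.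
  by have := max_card Z; have := max_card O; lia.
have enum_nthP (A : {set I}) i : (i < #|A|)%N ->
    nth x0 (enum A) i \in A /\ index (nth x0 (enum A) i) (enum A) = i.
  by move=> ltiA; rewrite -mem_enum mem_nth ?index_uniq ?enum_uniq -?cardE.
(* The i-th element of Z goes to bin i, the (2q)-th and (2q+1)-th elements of
   O go to bin #|Z| + q; [inord] sends all overflowing indices to bin 0. *)
pose f j : 'I_m.+1 :=
  inord (if j \in Z then index j (enum Z) else #|Z| + (index j (enum O))./2).
have fO j : j \in O -> f j = inord (#|Z| + (index j (enum O))./2).
  by move=> jO; rewrite /f (disjointFl dZO jO).
exists f => t; have [ltZ | geZ] := ltnP t #|Z|.
  have [jZ jt] := enum_nthP Z t ltZ.
  by left; exists (nth x0 (enum Z) t); rewrite // /f jZ jt inord_val.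
right; have ltt := ltn_ord t; set q := (t - #|Z|)%N.
have [j1O j1q] := enum_nthP O q.*2 ltac:(lia).
have [j2O j2q] := enum_nthP O q.*2.+1 ltac:(lia).
exists (nth x0 (enum O) q.*2), (nth x0 (enum O) q.*2.+1); split=> //.
- by rewrite nth_uniq ?enum_uniq -?cardE //; lia.
- by apply: val_inj; rewrite fO //= j1q inordK; lia.
- by apply: val_inj; rewrite fO //= j2q inordK; lia.
Qed.

Lemma ler_sum_term (R : numDomainType) (I : finType) (P : pred I) (F : I -> R) j :
  (forall i, P i -> 0 <= F i) -> P j -> F j <= \sum_(i | P i) F i.
Proof.
by move=> F_ge0 Pj; rewrite (bigD1 j) //= lerDl sumr_ge0 // => i /andP[/F_ge0].
Qed.

Lemma ler_sum_pair (R : numDomainType) (I : finType) (P : pred I) (F : I -> R) j1 j2 :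
  (forall i, P i -> 0 <= F i) -> P j1 -> P j2 -> j1 != j2 ->
  F j1 + F j2 <= \sum_(i | P i) F i.
Proof.
move=> F_ge0 Pj1 Pj2 j12; rewrite (bigD1 j1) //= lerD2l.
by apply: ler_sum_term => [i /andP[/F_ge0] //|]; rewrite Pj2 eq_sym.
Qed.

Section Bundles.
Variables (R : realFieldType) (G : finType) (v : G -> R).

Lemma bundle_setD d (T S : {set G}) (a : {ffun G -> 'I_d}) j :
  bundle (T :\: S) a j = bundle T a j :\: S.
Proof. by apply/setP => g; rewrite !inE andbA andbAC. Qed.

Lemma sum_card_bundleI d (T S : {set G}) (a : {ffun G -> 'I_d}) :
  S \subset T -> (\sum_j #|bundle T a j :&: S|)%N = #|S|.
Proof.
move=> sST; rewrite -sum1_card (partition_big a xpredT) //=.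
apply: eq_bigr => j _; rewrite -sum1_card; apply: eq_bigl => g; rewrite !inE.
by case: (boolP (g \in S)) => [/(subsetP sST)->|]; rewrite ?andbT ?andbF.
Qed.

Lemma bval_bundle_merge d e (T : {set G}) (a : {ffun G -> 'I_d}) (f : 'I_d -> 'I_e) t :
  bval v (bundle T [ffun g => f (a g)] t) = \sum_(j | f j == t) bval v (bundle T a j).
Proof.
rewrite /bval (partition_big a (fun j => f j == t)) => [|g]; last first.
  by rewrite inE ffunE => /andP[].
apply: eq_bigr => j /eqP fj; apply: eq_bigl => g; rewrite !inE ffunE.
by case: (a g =P j) => [->|_]; rewrite ?fj ?eqxx ?andbF ?andbT.
Qed.

Lemma bval_setD_ge (B S : {set G}) c : (forall g, g \in S -> v g <= c) ->
  bval v B - #|B :&: S|%:R * c <= bval v (B :\: S).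
Proof.
move=> le_c; rewrite /bval (big_setID S) /= addrC lerBlDr lerD2l.
by rewrite mulr_natl -sumr_const; apply: ler_sum => g /setIP[_ /le_c].
Qed.

Lemma le_MMS d (T : {set G}) (a : {ffun G -> 'I_d.+1}) y :
  (forall j, y <= bval v (bundle T a j)) -> y <= MMS v d.+1 T.
Proof. by move=> le_y; apply: le_trans (le_bigmax _ _ a); apply: le_bigmin. Qed.

Lemma MMS_optimal d (T : {set G}) :
  exists a : {ffun G -> 'I_d.+1}, forall j, MMS v d.+1 T <= bval v (bundle T a j).
Proof.
have [a _ a_max] := arg_maxP (i0 := [ffun=> ord0 : 'I_d.+1]) (P := xpredT)
  (part_min v T) isT.
exists a => j; apply: (@le_trans _ _ (part_min v T a)); last exact: bigmin_le.
by apply: bigmax_le => [|b _]; exact: a_max.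
Qed.

Lemma le_MMS_merge d m (T : {set G}) (a : {ffun G -> 'I_d}) (Z O : {set 'I_d})
    (f : 'I_d -> 'I_m.+1) y :
  merge_map Z O f -> (forall j, 0 <= bval v (bundle T a j)) ->
  {in Z, forall j, y <= bval v (bundle T a j)} ->
  {in O, forall j, y / 2 <= bval v (bundle T a j)} ->
  y <= MMS v m.+1 T.
Proof.
move=> f_merge bval_ge0 le_Z le_O.
apply: (le_MMS (a := [ffun g => f (a g)])) => t; rewrite bval_bundle_merge.
have fibre_ge0 j : f j == t -> 0 <= bval v (bundle T a j) by move=> _; apply: bval_ge0.
have [[j jZ /eqP fj] | [j1 [j2 [j1O j2O j12 /eqP fj1 /eqP fj2]]]] := f_merge t.
  exact: le_trans (le_Z j jZ) (ler_sum_term fibre_ge0 fj).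
apply: le_trans (ler_sum_pair fibre_ge0 fj1 fj2 j12).
by rewrite [y]splitr lerD ?le_O.
Qed.

End Bundles.

Theorem lemma32 (R : realFieldType) (G : finType) (M : {set G}) (v : G -> R)
  (n k : nat) (S : {set G}) (x : R) :
  (forall g, g \in M -> 0 <= v g) ->
  (0 < n)%N -> (k < n)%N ->
  S \subset M -> #|S| = (2 * k)%N ->
  0 <= x ->
  (forall g, g \in S -> v g <= MMS v n M / 2 + x) ->
  MMS v n M - 2 * x <= MMS v (n - k) (M :\: S).
Proof.
move=> v_ge0 n_gt0 lt_kn sSM cardS x_ge0 v_S.
case: n n_gt0 lt_kn v_S => [//|n] _ lt_kn v_S; set mu := MMS v n.+1 M in v_S *.
have [m n_k] : exists m, (n.+1 - k)%N = m.+1 by exists (n - k)%N; lia.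
have [a mu_le] := MMS_optimal v n M.
pose s j := #|bundle M a j :&: S|.
have le_rest j : mu - (s j)%:R * (mu / 2 + x) <= bval v (bundle (M :\: S) a j).
  by rewrite bundle_setD; apply: le_trans _ (bval_setD_ge _ v_S); rewrite lerD2r.
set Z := [set j | s j == 0]; set O := [set j | s j == 1].
have [f f_merge] : exists f : 'I_n.+1 -> 'I_m.+1, merge_map Z O f.
  apply: exists_merge_map.
    by rewrite disjoints_subset; apply/subsetP => j; rewrite !inE => /eqP->.
  by have := double_card_leq s; rewrite card_ord sum_card_bundleI // cardS -/Z -/O; lia.
rewrite n_k; apply: (le_MMS_merge f_merge) => j.
- by apply: sumr_ge0 => g; rewrite !inE => /andP[/andP[_ /v_ge0]].
- by rewrite inE => /eqP s0; have := le_rest j; rewrite s0; lra.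
- by rewrite inE => /eqP s1; have := le_rest j; rewrite s1; lra.
Qed.
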